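(* Let $\Omega\subset\mathbb{C}^n$ be a bounded domain, let $\mathcal R$ and $\mathcal R'$ be quasi-free Hilbert modules over $A(\Omega)$ with generating sets $\{f_i\}_{i=1}^m$ and $\{g_i\}_{i=1}^m$, $1\le m<\infty$, and let $X:\mathcal R\to\mathcal R'$ be a module map. Then there exists $\Psi=(\psi_{ij})\in\mathrm{Hol}_m(\Omega)$ such that \[Xf_i=\sum_{j=1}^m\psi_{ij}g_j\quad\text{for }1\le i\le m.\]
   Context: $A(\Omega)$ is the closure, in the supremum norm on $\Omega$, of the set of functions holomorphic on some neighbourhood of $\overline\Omega$; $\ell^2_m$ is the $m$-dimensional Hilbert space and $\mathrm{Hol}_m(\Omega)$ is the space of holomorphic $\mathcal L(\ell^2_m)$-valued functions on $\Omega$ (holomorphic $m\times m$ matrix functions). A quasi-free Hilbert module of rank $m$ over $A(\Omega)$ is a Hilbert space $\mathcal R$ obtained as the completion of $A(\Omega)\otimes\ell^2_m$ (regarded as $\ell^2_m$-valued holomorphic functions on $\Omega$) with respect to an inner product such that: (1) for each $z\in\Omega$ evaluation at $z$ is bounded, with norm locally uniformly bounded in $z$; (2) $\|\varphi F\|_{\mathcal R}\le\|\varphi\|_{A(\Omega)}\|F\|_{\mathcal R}$; (3) if $(F_i)$ is Cauchy in $\mathcal R$-norm, then $F_i(z)\to0$ for all $z$ iff $\|F_i\|_{\mathcal R}\to0$. $A(\Omega)$ acts by multiplication. A generating set is $\{f_1,\dots,f_m\}\subset\mathcal R$ whose $A(\Omega)$-multiples span a dense subspace and whose localizations at each $z\in\Omega$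 form a basis of the localization $\mathcal R/\mathcal R_z$ ($\mathcal R_z$ the closure of $\{\varphi h:\varphi(z)=0\}$); then $\{f_i(z)\}$ is a basis of $\ell^2_m$ for each $z$. A module map is a bounded linear $X$ with $X(\varphi h)=\varphi X(h)$. In the identity $Xf_i=\sum_j\psi_{ij}g_j$ the right side means the function $z\mapsto\sum_j\psi_{ij}(z)g_j(z)$. *)

(* C^n is modelled as 'rV[Cx R]_n with Cx R = R[i] (the complex numbers over a
   real type R), equipped with MathComp-Analysis' normed/topological structure;
   holomorphy = complex (Frechet) differentiability, since MathComp-Analysis'
   [differentiable] over the scalar field Cx R requires a C-linear differential. *)
From HB Require Import structures.
From mathcomp Require Import all_boot all_order all_algebra.
From mathcomp Require Import complex.
From mathcomp Require Import all_classical all_reals all_analysis.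
Import Order.TTheory GRing.Theory Num.Theory.
Import numFieldNormedType.Exports numFieldTopology.Exports.

Set Implicit Arguments.
Unset Strict Implicit.
Unset Printing Implicit Defensive.

Local Open Scope classical_set_scope.
Local Open Scope ring_scope.

(* The complex numbers, seen as a numClosedFieldType (so that the analysis
   library's topology/norm instances apply). *)
Definition Cx (R : realType) : numClosedFieldType := R[i].

Section QuasiFree.
Variable R : realType.
Local Notation C := (Cx R).
Variable n : nat.
Local Notation Cn := ('rV[C]_n).

Definition bounded_domain (Om : set Cn) : Prop :=
  [/\ open Om, connected Om, Om !=set0 & bounded_set Om].

Definition holomorphic_on (W : normedModType C) (U : set Cn) (f : Cn -> W) : Prop :=
  forall z, U z -> differentiable f z.

(* A(Om): the sup-norm-on-Om closure of the functions holomorphic on some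
   open neighbourhood of the closure of Om (only values on Om matter). *)
Definition Aalg (Om : set Cn) : set (Cn -> C) := fun phi =>
  forall e : C, 0 < e -> exists V : set Cn,
    [/\ open V, closure Om `<=` V &
      exists g : Cn -> C, holomorphic_on V g /\
        (forall z, Om z -> `|phi z - g z| < e)].

Variable m : nat.
Local Notation Cm := ('rV[C]_m).
Local Notation fn := (Cn -> Cm).

Definition l2norm (v : Cm) : C := sqrtC (\sum_(k < m) v 0 k * (v 0 k)^*).

Definition hnorm (ip : fn -> fn -> C) (F : fn) : C := sqrtC (ip F F).

Definition fsub (F G : fn) : fn := fun z => F z - G z.
Definition fscale (phi : Cn -> C) (F : fn) : fn := fun z => phi z *: F z.
Definition lincomb (a : 'I_m -> C) (f : 'I_m -> fn) : fn :=
  fun z => \sum_(i < m) a i *: f i z.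

(* elements of the module are functions on C^n vanishing off Om
   (representation convention: a function on Om is extended by 0) *)
Definition supported_in (Om : set Cn) (F : fn) : Prop :=
  forall z, ~ Om z -> F z = 0.

(* A(Om) (x) l^2_m, as l^2_m-valued functions on Om *)
Definition Atensor (Om : set Cn) : set fn := fun F =>
  supported_in Om F /\ forall k : 'I_m, Aalg Om (fun z => F z 0 k).

Definition hcauchy (ip : fn -> fn -> C) (u : nat -> fn) : Prop :=
  forall e : C, 0 < e -> exists N, forall p q, (N <= p)%N -> (N <= q)%N ->
    hnorm ip (fsub (u p) (u q)) < e.

(* A quasi-free Hilbert module of rank m over A(Om): a Hilbert space M of
   l^2_m-valued holomorphic functions on Om with inner product ip, which is the
   completion of A(Om) (x) l^2_m and satisfies conditions (1)-(3). *)
Record quasi_free (Om : set Cn) (M : set fn) (ip : fn -> fn -> C) : Prop := {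
  qf_fun : forall F, M F -> supported_in Om F /\ holomorphic_on Om F;
  qf_zero : M (fun _ => 0);
  qf_lin : forall (a : C) F G, M F -> M G -> M (fun z => a *: F z + G z);
  qf_ip_lin : forall (a : C) F G H, M F -> M G -> M H ->
    ip (fun z => a *: F z + G z) H = a * ip F H + ip G H;
  qf_ip_herm : forall F G, M F -> M G -> ip G F = (ip F G)^*;
  qf_ip_pos : forall F, M F -> 0 <= ip F F;
  qf_ip_def : forall F, M F -> ip F F = 0 -> F = (fun _ => 0);
  qf_complete : forall u : nat -> fn, (forall k, M (u k)) -> hcauchy ip u ->
    exists F, M F /\ hnorm ip (fsub (u k) F) @[k --> \oo] --> (0 : C);
  qf_tensor_sub : Atensor Om `<=` M;
  qf_tensor_dense : forall F, M F -> forall e : C, 0 < e ->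
    exists G, Atensor Om G /\ hnorm ip (fsub F G) < e;
  (* (1) bounded evaluations, with locally uniformly bounded norms *)
  qf_eval : forall z, Om z -> exists c : C,
    \forall w \near z, forall F, M F -> l2norm (F w) <= c * hnorm ip F;
  (* (2) contractive module action of A(Om) (sup norm over Om) *)
  qf_action : forall phi F, Aalg Om phi -> M F ->
    M (fscale phi F) /\
    forall c : C, 0 <= c -> (forall z, Om z -> `|phi z| <= c) ->
      hnorm ip (fscale phi F) <= c * hnorm ip F;
  qf_cauchy : forall u : nat -> fn, (forall k, Atensor Om (u k)) -> hcauchy ip u ->
    ((forall z, Om z -> u k z @[k --> \oo] --> (0 : Cm)) <->
     hnorm ip (u k) @[k --> \oo] --> (0 : C))
}.

Definition Rz (Om : set Cn) (M : set fn) (ip : fn -> fn -> C) (z : Cn) : set fn :=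
  fun h => M h /\ forall e : C, 0 < e ->
    exists N (phi : 'I_N -> Cn -> C) (hs : 'I_N -> fn),
      (forall k, [/\ Aalg Om (phi k), phi k z = 0 & M (hs k)]) /\
      hnorm ip (fun w => h w - \sum_(k < N) phi k w *: hs k w) < e.

Definition generating_set (Om : set Cn) (M : set fn) (ip : fn -> fn -> C)
    (f : 'I_m -> fn) : Prop :=
  [/\ forall i, M (f i),
      (forall F, M F -> forall e : C, 0 < e ->
         exists phi : 'I_m -> Cn -> C, (forall i, Aalg Om (phi i)) /\
           hnorm ip (fun w => F w - \sum_(i < m) phi i w *: f i w) < e) &
      (* the localizations f_i + R_z form a basis of R / R_z *)
      forall z, Om z ->
        (forall a : 'I_m -> C, Rz Om M ip z (lincomb a f) -> forall i, a i = 0) /\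
        (forall h, M h -> exists a : 'I_m -> C, Rz Om M ip z (fsub h (lincomb a f)))].

Definition module_map (Om : set Cn) (M : set fn) (ip : fn -> fn -> C)
    (M' : set fn) (ip' : fn -> fn -> C) (X : fn -> fn) : Prop :=
  [/\ forall F, M F -> M' (X F),
      forall (a : C) F G, M F -> M G ->
        X (fun z => a *: F z + G z) = (fun z => a *: X F z + X G z),
      exists c : C, forall F, M F -> hnorm ip' (X F) <= c * hnorm ip F &
      forall phi F, Aalg Om phi -> M F -> X (fscale phi F) = fscale phi (X F)].

End QuasiFree.

From HB Require Import structures.
From mathcomp Require Import all_boot all_order all_algebra.
From mathcomp Require Import complex ring.
From mathcomp Require Import all_classical all_reals all_analysis.
Import Order.TTheory GRing.Theory Num.Theory.
Import numFieldNormedType.Exports numFieldTopology.Exports.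
Local Open Scope classical_set_scope.
Local Open Scope ring_scope.

(* If h lies in the module and h(z) = 0, approximate h by G in A(Om) (x) l^2_m.
   Then h - (G - G(z) on Om) is h - G plus the constant G(z) on Om, and G(z) is
   small because evaluation at z is bounded and h(z) = 0; as G - G(z) has
   coefficients in A(Om) vanishing at z, h lies in R_z.  Applied to
   sum_j v_j g_j with sum_j v_j g_j(z) = 0, the basis property of the
   localizations forces v = 0: the matrix G(z) with rows g_j(z) is invertible
   on Om.  Hence Psi = F G^-1, where F has rows (X f_i)(z), and by Cramer's rule
   Psi = det(G)^-1 F adj(G) is holomorphic. *)

Section MatrixDifferentiable.
Context {K : numFieldType} {V : normedModType K} {x : V}.

Lemma differentiable_big_sum {W : normedModType K} {I : Type} {r : seq I}
    {P : pred I} {F : I -> V -> W} :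
  (forall i, P i -> differentiable (F i) x) ->
  differentiable (fun w => \sum_(i <- r | P i) F i w) x.
Proof.
move=> dF; rewrite -fct_sumE.
by elim/big_ind: _ => // f g; exact: differentiableD.
Qed.

Lemma differentiable_big_prod {I : Type} {r : seq I} {P : pred I} {F : I -> V -> K} :
  (forall i, P i -> differentiable (F i) x) ->
  differentiable (fun w => \prod_(i <- r | P i) F i w) x.
Proof.
move=> dF; rewrite -fct_prodE.
by elim/big_ind: _ => // f g; exact: differentiableM.
Qed.

Lemma differentiable_mxP {p q} {A : V -> 'M[K]_(p, q)} :
  differentiable A x <-> forall i j, differentiable (fun w => A w i j) x.
Proof.
split=> [dA i j|dA]; first exact: differentiable_comp dA (differentiable_coord _ i j).
have -> : A = fun w => \sum_i \sum_j A w i j *: delta_mx i j.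
  by apply: funext => w; rewrite {1}[A w]matrix_sum_delta.
by do 2!apply: differentiable_big_sum => ? _; exact: differentiableZl.
Qed.

Lemma differentiable_det {k} {A : V -> 'M[K]_k} :
  differentiable A x -> differentiable (fun w => \det (A w)) x.
Proof.
move/differentiable_mxP=> dA; apply: differentiable_big_sum => s _.
apply: differentiableM; first exact: differentiable_cst.
by apply: differentiable_big_prod.
Qed.

Lemma differentiable_adj {k} {A : V -> 'M[K]_k} :
  differentiable A x -> differentiable (fun w => \adj (A w)) x.
Proof.
move=> dA; apply/differentiable_mxP => i j.
under eq_fun do rewrite mxE /cofactor.
apply: differentiableM; first exact: differentiable_cst.
apply: differentiable_det; apply/differentiable_mxP => a b.
under eq_fun do rewrite !mxE.
by move/differentiable_mxP: dA; apply.
Qed.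

Lemma differentiable_mulmx {p q r} {A : V -> 'M[K]_(p, q)} {B : V -> 'M[K]_(q, r)} :
  differentiable A x -> differentiable B x -> differentiable (fun w => A w *m B w) x.
Proof.
move=> /differentiable_mxP dA /differentiable_mxP dB; apply/differentiable_mxP => i j.
under eq_fun do rewrite mxE.
by apply: differentiable_big_sum => l _; exact: differentiableM.
Qed.

Lemma differentiable_scalemx {p q} {c : V -> K} {A : V -> 'M[K]_(p, q)} :
  differentiable c x -> differentiable A x -> differentiable (fun w => c w *: A w) x.
Proof.
move=> dc /differentiable_mxP dA; apply/differentiable_mxP => i j.
under eq_fun do rewrite mxE.
exact: differentiableM.
Qed.

Lemma differentiable_mx_of_rows {p q} {F : 'I_p -> V -> 'rV[K]_q} :
  (forall i, differentiable (F i) x) ->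
  differentiable (fun w => \matrix_(i, j) F i w 0 j) x.
Proof.
move=> dF; apply/differentiable_mxP => i j; under eq_fun do rewrite mxE.
by move/differentiable_mxP: (dF i); apply.
Qed.

End MatrixDifferentiable.

Lemma l2norm_coord_le {R : realType} {m : nat} (v : 'rV[Cx R]_m) k :
  `|v 0 k| <= l2norm v.
Proof.
have sq_ge0 j : 0 <= v 0 j * (v 0 j)^* by exact: mul_conjC_ge0.
rewrite /l2norm -(sqrCK (normr_ge0 (v 0 k))) ler_sqrtC ?nnegrE ?exprn_ge0 ?sumr_ge0 //.
by rewrite normCK (bigD1 k) //= lerDl sumr_ge0.
Qed.

Section QuasiFreeModule.
Context {R : realType} {n m : nat} {Om : set 'rV[Cx R]_n}.
Local Notation C := (Cx R).
Local Notation fn := ('rV[C]_n -> 'rV[C]_m).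
Context {M : set fn} {ip : fn -> fn -> C}.
Hypothesis hM : quasi_free Om M ip.

Lemma qf_sum {I : Type} (r : seq I) (c : I -> C) {E : I -> fn} :
  (forall k, M (E k)) -> M (fun w => \sum_(k <- r) c k *: E k w).
Proof.
move=> ME; elim: r => [|a r IH].
  under eq_fun do rewrite big_nil.
  exact: qf_zero hM.
under eq_fun do rewrite big_cons.
exact (qf_lin hM (c a) (ME a) IH).
Qed.

Lemma qf_ip0 : ip (fun _ => 0) (fun _ => 0) = 0.
Proof.
have M0 := qf_zero hM.
have := qf_ip_lin hM 1 M0 M0 M0.
under eq_fun do rewrite scale1r addr0.
by rewrite mul1r -{1}[ip _ _]addr0 => /addrI <-.
Qed.

Lemma qf_ip_scaleD a {F G} : M F -> M G ->
  ip (fun z => a *: F z + G z) (fun z => a *: F z + G z) =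
  `|a| ^+ 2 * ip F F + a * ip F G + a^* * ip G F + ip G G.
Proof.
move=> MF MG; have MaFG := qf_lin hM a MF MG.
rewrite (qf_ip_lin hM a MF MG MaFG) (qf_ip_herm hM MaFG MF) (qf_ip_herm hM MaFG MG).
rewrite (qf_ip_lin hM a MF MG MF) (qf_ip_lin hM a MF MG MG) !rmorphD !rmorphM /=.
rewrite -(qf_ip_herm hM MF MF) -(qf_ip_herm hM MG MG).
by rewrite -(qf_ip_herm hM MF MG) -(qf_ip_herm hM MG MF) normCK; ring.
Qed.

Lemma qf_ip_scaleD_le a {F G} : M F -> M G ->
  ip (fun z => a *: F z + G z) (fun z => a *: F z + G z) <=
  2 * `|a| ^+ 2 * ip F F + 2 * ip G G.
Proof.
move=> MF MG.
have parallelogram : ip (fun z => a *: F z + G z) (fun z => a *: F z + G z) +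
    ip (fun z => - a *: F z + G z) (fun z => - a *: F z + G z) =
    2 * `|a| ^+ 2 * ip F F + 2 * ip G G.
  by rewrite !qf_ip_scaleD // normrN rmorphN /=; ring.
by rewrite -parallelogram lerDl (qf_ip_pos hM (qf_lin hM _ MF MG)).
Qed.

(* The crude factor [2 ^+ size r] comes from iterating [qf_ip_scaleD_le], which
   avoids the Cauchy-Schwarz inequality. *)
Lemma qf_ip_sum_le {I : Type} (r : seq I) (c : I -> C) {E : I -> fn} {d : C} :
  (forall k, M (E k)) -> 0 <= d -> (forall k, `|c k| ^+ 2 <= d) ->
  ip (fun w => \sum_(k <- r) c k *: E k w) (fun w => \sum_(k <- r) c k *: E k w)
   <= 2 ^+ size r * d * \sum_(k <- r) ip (E k) (E k).
Proof.
move=> ME d0 cd; elim: r => [|a r IH].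
  under eq_fun do rewrite big_nil.
  by rewrite qf_ip0 big_nil mulr0.
under eq_fun do rewrite big_cons.
apply: le_trans (qf_ip_scaleD_le (c a) (ME a) (qf_sum r c ME)) _.
have Ea_ge0 := qf_ip_pos hM (ME a).
have two_pow_ge1 : 1 <= 2 ^+ size r :> C by rewrite exprn_ege1 ?ler1n.
rewrite big_cons /= [2 ^+ (size r).+1]exprS mulrDr.
apply: lerD; rewrite -!mulrA ler_wpM2l //.
  rewrite mulrA -expr2; apply: le_trans (ler_wpM2r Ea_ge0 (cd a)) _.
  by rewrite ler_peMl ?mulr_ge0.
by rewrite mulrA.
Qed.

Lemma Atensor_indicator (v : 'rV[C]_m) :
  Atensor Om (fun w => if `[< Om w >] then v else 0).
Proof.
split=> [w /asboolPn/negbTE -> //|k e e0].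
exists setT; split; [exact: openT | by [] |].
exists (fun=> v 0 k); split=> [w _|w Omw]; first exact: differentiable_cst.
by rewrite asboolT // subrr normr0.
Qed.

Lemma Aalg_subr_cst phi c : Aalg Om phi -> Aalg Om (fun w => phi w - c).
Proof.
move=> Aphi e e0; have [V [oV clV [g [hg phig]]]] := Aphi e e0.
exists V; split=> //; exists (fun w => g w - c); split=> [w Vw|w Omw].
  exact: differentiableB (hg w Vw) (differentiable_cst c w).
by rewrite opprB addrA subrK; exact: phig.
Qed.

Lemma qf_eval_coord_le {z} : Om z ->
  exists2 c : C, 0 <= c & forall F k, M F -> `|F z 0 k| <= c * hnorm ip F.
Proof.
move=> Omz; have [c /nbhs_singleton evalz] := qf_eval hM Omz.
exists `|c|; rewrite // => F k MF.
have le_ch := le_trans (l2norm_coord_le (F z) k) (evalz F MF).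
have ch_ge0 : 0 <= c * hnorm ip F := le_trans (normr_ge0 _) le_ch.
have hF_ge0 : 0 <= hnorm ip F by rewrite sqrtC_ge0 (qf_ip_pos hM MF).
by rewrite -(ger0_norm ch_ge0) normrM (ger0_norm hF_ge0) in le_ch.
Qed.

Lemma qf_fsub {F G} : M F -> M G -> M (fsub F G).
Proof.
move=> MF MG; have -> : fsub F G = fun w => (-1) *: G w + F w.
  by apply: funext => w; rewrite /fsub scaleN1r addrC.
exact (qf_lin hM _ MG MF).
Qed.

Definition indicator_basis (k : 'I_m) : fn :=
  fun w => if `[< Om w >] then delta_mx 0 k else 0.

Lemma indicator_basis_mem k : M (indicator_basis k).
Proof. exact (qf_tensor_sub hM (Atensor_indicator _)). Qed.

Lemma indicator_basis_recentre z h G w : supported_in Om h -> supported_in Om G ->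
  h w - \sum_k (G w 0 k - G z 0 k) *: indicator_basis k w =
  1 *: fsub h G w + \sum_k G z 0 k *: indicator_basis k w.
Proof.
move=> supp_h supp_G; rewrite /indicator_basis /fsub scale1r.
case: (pselect (Om w)) => Omw.
  under eq_bigr do rewrite asboolT // scalerBl.
  under [X in _ = _ + X]eq_bigr do rewrite asboolT //.
  by rewrite sumrB -row_sum_delta opprB addrA addrAC.
rewrite asboolF // !big1 => [|k _|k _]; rewrite ?scaler0 //.
by rewrite supp_h // supp_G // !subr0 addr0.
Qed.

Lemma qf_ip_recentre_le {z h} : Om z -> M h -> h z = 0 ->
  exists2 L : C, 1 <= L & forall G, Atensor Om G ->
    ip (fun w => 1 *: fsub h G w + \sum_k G z 0 k *: indicator_basis k w)
       (fun w => 1 *: fsub h G w + \sum_k G z 0 k *: indicator_basis k w)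
    <= L * hnorm ip (fsub h G) ^+ 2.
Proof.
move=> Omz Mh hz0; have [c c_ge0 evalz] := qf_eval_coord_le Omz.
pose K := \sum_k ip (indicator_basis k) (indicator_basis k).
have K_ge0 : 0 <= K.
  by rewrite sumr_ge0 // => k _; exact (qf_ip_pos hM (indicator_basis_mem k)).
exists (2 + 2 * (2 ^+ size (index_enum 'I_m) * c ^+ 2 * K)).
  by rewrite ler_wpDr ?ler1n // !mulr_ge0 ?exprn_ge0.
move=> G AG; have MhG := qf_fsub Mh (qf_tensor_sub hM AG).
set t := hnorm ip (fsub h G).
have t_ge0 : 0 <= t by rewrite sqrtC_ge0 (qf_ip_pos hM MhG).
have Gz_le k : `|G z 0 k| ^+ 2 <= c ^+ 2 * t ^+ 2.
  have := evalz _ k MhG; rewrite /fsub hz0 sub0r mxE normrN -/t => Gz_le.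
  by rewrite -exprMn lerXn2r ?nnegrE ?mulr_ge0.
have := qf_ip_sum_le (index_enum 'I_m) (fun k => G z 0 k) indicator_basis_mem
  (mulr_ge0 (exprn_ge0 2 c_ge0) (exprn_ge0 2 t_ge0)) Gz_le.
rewrite -/K => sum_le.
apply: le_trans (qf_ip_scaleD_le 1 MhG (qf_sum _ _ indicator_basis_mem)) _.
have ip_hG : ip (fsub h G) (fsub h G) = t ^+ 2 by rewrite /t /hnorm sqrtCK.
rewrite normr1 expr1n mulr1 ip_hG.
have -> : (2 + 2 * (2 ^+ size (index_enum 'I_m) * c ^+ 2 * K)) * t ^+ 2 =
    2 * t ^+ 2 + 2 * (2 ^+ size (index_enum 'I_m) * (c ^+ 2 * t ^+ 2) * K).
  by ring.
by rewrite lerD2l ler_wpM2l.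
Qed.

Lemma Rz_of_vanishing {z h} : Om z -> M h -> h z = 0 -> Rz Om M ip z h.
Proof.
move=> Omz Mh hz0; split=> // e e0.
have [L L_ge1 ip_le] := qf_ip_recentre_le Omz Mh hz0.
have L_gt0 : 0 < L := lt_le_trans ltr01 L_ge1.
have [G [AG hG]] := qf_tensor_dense hM Mh (divr_gt0 e0 L_gt0).
exists m, (fun k w => G w 0 k - G z 0 k), indicator_basis; split.
  move=> k; split;
    [exact: Aalg_subr_cst (AG.2 k) | by rewrite subrr | exact: indicator_basis_mem].
under eq_fun => w do rewrite (indicator_basis_recentre z h G w (qf_fun hM Mh).1 AG.1).
have MhG := qf_fsub Mh (qf_tensor_sub hM AG).
have M_recentred :=
  qf_lin hM 1 MhG (qf_sum (index_enum _) (fun k => G z 0 k) indicator_basis_mem).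
rewrite /hnorm -(sqrCK (ltW e0)) ltr_sqrtC ?nnegrE ?exprn_ge0 ?(ltW e0) //; last first.
  exact (qf_ip_pos hM M_recentred).
apply: le_lt_trans (ip_le G AG) _.
set t := hnorm ip (fsub h G) in hG *.
have t_ge0 : 0 <= t by rewrite sqrtC_ge0 (qf_ip_pos hM MhG).
apply: (@le_lt_trans _ _ ((L * t) ^+ 2)).
  by rewrite exprMn ler_wpM2r ?exprn_ge0 // expr2 ler_peMl ?(ltW L_gt0).
by rewrite ltrXn2r ?nnegrE ?mulr_ge0 ?(ltW L_gt0) ?(ltW e0) // mulrC -ltr_pdivlMr.
Qed.

End QuasiFreeModule.

Lemma det_generating_set_neq0 {R : realType} {n m : nat} {Om : set 'rV[Cx R]_n}
    {M : set ('rV[Cx R]_n -> 'rV[Cx R]_m)} {ip}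
    {g : 'I_m -> 'rV[Cx R]_n -> 'rV[Cx R]_m} {z} :
  quasi_free Om M ip -> generating_set Om M ip g -> Om z ->
  \det (\matrix_(j, k) g j z 0 k) != 0.
Proof.
move=> hM [Mg _ localization_basis] Omz; apply/negP => /det0P [v v_neq0 vG0].
have Mvg : M (lincomb (fun j => v 0 j) g) := qf_sum hM _ _ Mg.
have vg_z0 : lincomb (fun j => v 0 j) g z = 0.
  apply/rowP => k; rewrite -[RHS](congr1 (fun u : 'rV_m => u 0 k) vG0) /lincomb.
  by rewrite summxE !mxE; apply: eq_bigr => j _; rewrite !mxE.
have v0 := (localization_basis z Omz).1 _ (Rz_of_vanishing hM Omz Mvg vg_z0).
by move/eqP: v_neq0; apply; apply/rowP => j; rewrite mxE v0.
Qed.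

Theorem lemma5 (R : realType) (n m : nat) (hn : (0 < n)%N) (hm : (0 < m)%N)
  (Om : set 'rV[Cx R]_n) (hOm : bounded_domain Om)
  (M : set ('rV[Cx R]_n -> 'rV[Cx R]_m)) (ip : ('rV[Cx R]_n -> 'rV[Cx R]_m) ->
     ('rV[Cx R]_n -> 'rV[Cx R]_m) -> Cx R)
  (M' : set ('rV[Cx R]_n -> 'rV[Cx R]_m)) (ip' : ('rV[Cx R]_n -> 'rV[Cx R]_m) ->
     ('rV[Cx R]_n -> 'rV[Cx R]_m) -> Cx R)
  (hM : quasi_free Om M ip) (hM' : quasi_free Om M' ip')
  (f g : 'I_m -> 'rV[Cx R]_n -> 'rV[Cx R]_m)
  (hf : generating_set Om M ip f) (hg : generating_set Om M' ip' g)
  (X : ('rV[Cx R]_n -> 'rV[Cx R]_m) -> ('rV[Cx R]_n -> 'rV[Cx R]_m))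
  (hX : module_map Om M ip M' ip' X) :
  exists Psi : 'rV[Cx R]_n -> 'M[Cx R]_m,
    holomorphic_on Om Psi /\
    forall (i : 'I_m) (z : 'rV[Cx R]_n), Om z ->
      X (f i) z = \sum_(j < m) Psi z i j *: g j z.
Proof.
have [XM _ _ _] := hX; have [Mf _ _] := hf; have [Mg _ _] := hg.
pose Gm w := \matrix_(j, k) g j w 0 k.
pose Fm w := \matrix_(i, k) X (f i) w 0 k.
have detGm_neq0 z : Om z -> \det (Gm z) != 0 := det_generating_set_neq0 hM' hg.
exists (fun w => (\det (Gm w))^-1 *: (Fm w *m \adj (Gm w))); split.
  move=> z Omz; have holo F := (qf_fun hM' F).2 z Omz.
  have dGm : differentiable Gm z by apply: differentiable_mx_of_rows => j; exact: holo.
  have dFm : differentiable Fm z by apply: differentiable_mx_of_rows => i; exact/holo/XM.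
  apply: differentiable_scalemx _ (differentiable_mulmx dFm (differentiable_adj dGm)).
  by apply: differentiableV; [exact: differentiable_det | exact: detGm_neq0].
move=> i z Omz.
have Fm_z : (\det (Gm z))^-1 *: (Fm z *m \adj (Gm z)) *m Gm z = Fm z.
  by rewrite -scalemxAl -mulmxA mul_adj_mx mul_mx_scalar scalerA mulVf ?scale1r ?detGm_neq0.
apply/rowP => k; have -> : X (f i) z 0 k = Fm z i k by rewrite mxE.
rewrite -{1}Fm_z summxE mxE.
by apply: eq_bigr => j _; rewrite [Gm z j k]mxE [RHS]mxE.
Qed.
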